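(* There exist flexible sphere-type polyhedra in the Minkowski 3-space $\mathbf{R}^3_1$.
   Context: $\mathbf{R}^3_1$ is $\mathbf{R}^3$ with scalar product $(x,y)=x_1y_1+x_2y_2-x_3y_3$ and length $|x|=\sqrt{(x,x)}$ (nonnegative real or $i$ times a positive real). A polyhedron is a continuous map $P:\Sigma\to\mathbf{R}^3_1$, where $\Sigma$ is a connected 2-dimensional simplicial complex that is a manifold, such that $P$ is affine and injective on each simplex; it is sphere-type if $\Sigma$ is homeomorphic to the 2-sphere. $P$ is flexible if there is a family of polyhedra $P_t:\Sigma\to\mathbf{R}^3_1$, $0\le t\le1$, analytic in $t$, with (i) $P_0=P$; (ii) for every edge $e$ of $\Sigma$ the length of $P_t(e)$ is independent of $t$; (iii) there exist vertices $v_1,v_2$ of $\Sigma$ such that $|P_t(v_1)-P_t(v_2)|$ is not constant in $t$. (The polyhedra need not be embedded.) *)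

From Stdlib Require Import Reals List.
From Coquelicot Require Import Coquelicot.
Open Scope R_scope.

Definition R3 : Type := (R * R * R)%type.
Definition r3x (x : R3) : R := fst (fst x).
Definition r3y (x : R3) : R := snd (fst x).
Definition r3z (x : R3) : R := snd x.
Definition r3sub (x y : R3) : R3 :=
  (r3x x - r3x y, r3y x - r3y y, r3z x - r3z y).
Definition r3add (x y : R3) : R3 :=
  (r3x x + r3x y, r3y x + r3y y, r3z x + r3z y).
Definition r3scal (a : R) (x : R3) : R3 := (a * r3x x, a * r3y x, a * r3z x).
Definition r3zero : R3 := (0, 0, 0).

Definition mink_dot (x y : R3) : R := r3x x * r3x y + r3y x * r3y y - r3z x * r3z y.

Definition mink_len (x : R3) : C :=
  let q := mink_dot x x in
  if Rle_dec 0 q then (sqrt q, 0) else (0, sqrt (- q)).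

(** Euclidean distance on R^3 (for the topology of the round sphere). *)
Definition eucl3 (x y : R3) : R :=
  sqrt ((r3x x - r3x y)^2 + (r3y x - r3y y)^2 + (r3z x - r3z y)^2).
Definition unit_sphere (x : R3) : Prop := r3x x ^ 2 + r3y x ^ 2 + r3z x ^ 2 = 1.

Fixpoint sumR (n : nat) (f : nat -> R) : R :=
  match n with O => 0 | S m => sumR m f + f m end.
Fixpoint sumR3 (n : nat) (f : nat -> R3) : R3 :=
  match n with O => r3zero | S m => r3add (sumR3 m f) (f m) end.

(** Points of the geometric realization are barycentric
   coordinate functions nat -> R. *)
Definition tri2 : Type := (nat * nat * nat)%type.
Definition tA (f : tri2) : nat := fst (fst f).
Definition tB (f : tri2) : nat := snd (fst f).
Definition tC (f : tri2) : nat := snd f.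

Definition in_triangle (f : tri2) (v : nat) : Prop :=
  v = tA f \/ v = tB f \/ v = tC f.

Definition simplicial_complex2 (n : nat) (faces : list tri2) : Prop :=
  faces <> nil /\
  (forall f, In f faces ->
     (tA f < n)%nat /\ (tB f < n)%nat /\ (tC f < n)%nat /\
     tA f <> tB f /\ tB f <> tC f /\ tA f <> tC f) /\
  (forall v, (v < n)%nat -> exists f, In f faces /\ in_triangle f v).

Definition in_simplex (f : tri2) (x : nat -> R) : Prop :=
  (forall v, ~ in_triangle f v -> x v = 0) /\
  0 <= x (tA f) /\ 0 <= x (tB f) /\ 0 <= x (tC f) /\
  x (tA f) + x (tB f) + x (tC f) = 1.

Definition realization (faces : list tri2) (x : nat -> R) : Prop :=
  exists f, In f faces /\ in_simplex f x.

Definition distn (n : nat) (x y : nat -> R) : R :=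
  sqrt (sumR n (fun v => (x v - y v) ^ 2)).

Definition sphere_type (n : nat) (faces : list tri2) : Prop :=
  exists (h : (nat -> R) -> R3) (g : R3 -> (nat -> R)),
    (forall x, realization faces x -> unit_sphere (h x)) /\
    (forall y, unit_sphere y -> realization faces (g y)) /\
    (forall x, realization faces x -> forall v, g (h x) v = x v) /\
    (forall y, unit_sphere y -> h (g y) = y) /\
    (forall x, realization faces x -> forall eps, 0 < eps -> exists delta, 0 < delta /\
       forall x', realization faces x' -> distn n x x' < delta -> eucl3 (h x) (h x') < eps) /\
    (forall y, unit_sphere y -> forall eps, 0 < eps -> exists delta, 0 < delta /\
       forall y', unit_sphere y' -> eucl3 y y' < delta -> distn n (g y) (g y') < eps).

(** * Polyhedra
   A continuous map Sigma -> R^3_1 affine on each simplex is determined by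
   the images p v of the vertices: it is x |-> sum_v x_v p_v. *)
Definition poly_map (n : nat) (p : nat -> R3) (x : nat -> R) : R3 :=
  sumR3 n (fun v => r3scal (x v) (p v)).

Definition is_polyhedron (n : nat) (faces : list tri2) (p : nat -> R3) : Prop :=
  forall f, In f faces -> forall x y, in_simplex f x -> in_simplex f y ->
    poly_map n p x = poly_map n p y -> forall v, x v = y v.

Definition is_edge (faces : list tri2) (a b : nat) : Prop :=
  a <> b /\ exists f, In f faces /\ in_triangle f a /\ in_triangle f b.

Definition analytic_on_01 (u : R -> R) : Prop :=
  forall t0, 0 <= t0 <= 1 -> exists r, 0 < r /\ exists a : nat -> R,
    forall t, 0 <= t <= 1 -> Rabs (t - t0) < r -> is_pseries a (t - t0) (u t).

Definition flexible (n : nat) (faces : list tri2) (p : nat -> R3) : Prop :=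
  exists P : R -> nat -> R3,
    (forall t, 0 <= t <= 1 -> is_polyhedron n faces (P t)) /\
    (forall v, (v < n)%nat ->
       analytic_on_01 (fun t => r3x (P t v)) /\
       analytic_on_01 (fun t => r3y (P t v)) /\
       analytic_on_01 (fun t => r3z (P t v))) /\
    (forall v, (v < n)%nat -> P 0 v = p v) /\
    (forall a b, is_edge faces a b -> forall t, 0 <= t <= 1 ->
       mink_len (r3sub (P t a) (P t b)) = mink_len (r3sub (P 0 a) (P 0 b))) /\
    (exists v1 v2, (v1 < n)%nat /\ (v2 < n)%nat /\
       exists t, 0 <= t <= 1 /\
         mink_len (r3sub (P t v1) (P t v2)) <> mink_len (r3sub (P 0 v1) (P 0 v2))).

From Stdlib Require Import Reals List Lra Lia.
From Coquelicot Require Import Coquelicot.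
Open Scope R_scope.

(* The example is an octahedron with vertices +-e_k (vertex 2k is +e_k, vertex
   2k+1 is -e_k), placed so that vertex 0 and its four neighbours 2, 3, 4, 5
   lie in the null plane x1 = x3, on which the Minkowski form is degenerate.
   Its normal (1,0,1) is a null vector lying in the plane, so translating
   vertex 0 along it keeps the squared lengths of all four edges at vertex 0
   (and of all other edges, which do not move), while the distance from
   vertex 0 to the opposite vertex 1, which is off the plane, changes.  Every
   face stays non-degenerate during the motion because its projection to the
   (x1,x2)-plane does.  Sphere type: the realization maps affinely onto the
   unit sphere of the l1 norm, which radial projection carries onto the round
   sphere. *)

Definition dcontinuous {A : Type} (d : A -> A -> R) (F : A -> R) (a : A) : Prop :=
  forall eps, 0 < eps -> exists delta, 0 < delta /\
    forall b, d a b < delta -> Rabs (F b - F a) < eps.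

Lemma continuity_pt_of_ex_derive (f : R -> R) x : ex_derive f x -> continuity_pt f x.
Proof. intro H; apply continuity_pt_filterlim; exact (ex_derive_continuous f x H). Qed.

Section DistContinuity.

Context {A : Type} (d : A -> A -> R).

Lemma dcontinuous_of_lipschitz (F : A -> R) a :
  (forall b, Rabs (F b - F a) <= d a b) -> dcontinuous d F a.
Proof.
  intros Hlip e He; exists e; split; [exact He|].
  intros b Hb; exact (Rle_lt_trans _ _ _ (Hlip b) Hb).
Qed.

Lemma dcontinuous_ext (F G : A -> R) a :
  (forall b, F b = G b) -> dcontinuous d F a -> dcontinuous d G a.
Proof.
  intros E HF e He; destruct (HF e He) as [delta [Hdelta H]].
  exists delta; split; [exact Hdelta|]; intros b Hb; rewrite <- !E; auto.
Qed.

Lemma dcontinuous_const (c : R) a : dcontinuous d (fun _ => c) a.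
Proof.
  intros e He; exists 1; split; [lra|]; intros b _.
  rewrite Rminus_diag, Rabs_R0; exact He.
Qed.

Lemma dcontinuous_comp (F : A -> R) (f : R -> R) a :
  dcontinuous d F a -> continuity_pt f (F a) -> dcontinuous d (fun b => f (F b)) a.
Proof.
  intros HF Hf e He.
  destruct (Hf e He) as [alpha [Halpha Hclose]].
  destruct (HF alpha Halpha) as [delta [Hdelta Hnear]].
  exists delta; split; [exact Hdelta|]; intros b Hb.
  destruct (Req_dec (F b) (F a)) as [E|E].
  - rewrite E, Rminus_diag, Rabs_R0; exact He.
  - apply (Hclose (F b)); split; [split; [exact I | congruence] | exact (Hnear b Hb)].
Qed.

Lemma dcontinuous_plus (F G : A -> R) a :
  dcontinuous d F a -> dcontinuous d G a -> dcontinuous d (fun b => F b + G b) a.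
Proof.
  intros HF HG e He.
  destruct (HF (e / 2)) as [d1 [Hd1 H1]]; [lra|].
  destruct (HG (e / 2)) as [d2 [Hd2 H2]]; [lra|].
  exists (Rmin d1 d2); split; [apply Rmin_pos; lra|]; intros b Hb.
  pose proof (H1 b (Rlt_le_trans _ _ _ Hb (Rmin_l _ _))).
  pose proof (H2 b (Rlt_le_trans _ _ _ Hb (Rmin_r _ _))).
  replace (F b + G b - (F a + G a)) with ((F b - F a) + (G b - G a)) by ring.
  pose proof (Rabs_triang (F b - F a) (G b - G a)); lra.
Qed.

Lemma dcontinuous_opp (F : A -> R) a : dcontinuous d F a -> dcontinuous d (fun b => - F b) a.
Proof.
  intro H; apply (dcontinuous_comp F (fun z => - z)); [exact H|].
  apply continuity_pt_of_ex_derive; auto_derive; trivial.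
Qed.

Lemma dcontinuous_minus (F G : A -> R) a :
  dcontinuous d F a -> dcontinuous d G a -> dcontinuous d (fun b => F b - G b) a.
Proof. intros HF HG; apply dcontinuous_plus, dcontinuous_opp; assumption. Qed.

Lemma dcontinuous_pow2 (F : A -> R) a :
  dcontinuous d F a -> dcontinuous d (fun b => F b ^ 2) a.
Proof.
  intro H; apply (dcontinuous_comp F (fun z => z ^ 2)); [exact H|].
  apply continuity_pt_of_ex_derive; auto_derive; trivial.
Qed.

(* Polarization reduces products to squares, i.e. to one-variable continuity. *)
Lemma dcontinuous_mult (F G : A -> R) a :
  dcontinuous d F a -> dcontinuous d G a -> dcontinuous d (fun b => F b * G b) a.
Proof.
  intros HF HG.
  apply (dcontinuous_ext (fun b => ((F b + G b) ^ 2 - (F b - G b) ^ 2) * / 4));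
    [intro b; field|].
  apply (dcontinuous_comp (fun b => (F b + G b) ^ 2 - (F b - G b) ^ 2) (fun z => z * / 4)).
  - apply dcontinuous_minus; apply dcontinuous_pow2;
      [apply dcontinuous_plus | apply dcontinuous_minus]; assumption.
  - apply continuity_pt_of_ex_derive; auto_derive; trivial.
Qed.

Lemma dcontinuous_inv (F : A -> R) a :
  dcontinuous d F a -> F a <> 0 -> dcontinuous d (fun b => / F b) a.
Proof.
  intros H Hnz; apply (dcontinuous_comp F (fun z => / z)); [exact H|].
  apply continuity_pt_of_ex_derive; auto_derive; exact Hnz.
Qed.

Lemma dcontinuous_sqrt (F : A -> R) a :
  dcontinuous d F a -> 0 <= F a -> dcontinuous d (fun b => sqrt (F b)) a.
Proof.
  intros H Hnn; apply (dcontinuous_comp F sqrt); [exact H | apply continuity_pt_sqrt, Hnn].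
Qed.

Lemma dcontinuous_abs (F : A -> R) a : dcontinuous d F a -> dcontinuous d (fun b => Rabs (F b)) a.
Proof. intro H; apply (dcontinuous_comp F Rabs); [exact H | apply Rcontinuity_abs]. Qed.

Lemma dcontinuous_common_delta n (F : A -> nat -> R) a eps :
  0 < eps -> (forall v, (v < n)%nat -> dcontinuous d (fun b => F b v) a) ->
  exists delta, 0 < delta /\
    forall b, d a b < delta -> forall v, (v < n)%nat -> Rabs (F b v - F a v) < eps.
Proof.
  intros He; induction n as [|n IH]; intros Hcont.
  - exists 1; split; [lra|]; intros b _ v Hv; lia.
  - destruct IH as [d1 [Hd1 H1]]; [intros v Hv; apply Hcont; lia|].
    destruct (Hcont n (Nat.lt_succ_diag_r n) eps He) as [d2 [Hd2 H2]].
    exists (Rmin d1 d2); split; [apply Rmin_pos; assumption|]; intros b Hb v Hv.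
    destruct (Nat.eq_dec v n) as [->|Hvn].
    + exact (H2 b (Rlt_le_trans _ _ _ Hb (Rmin_r _ _))).
    + apply (H1 b (Rlt_le_trans _ _ _ Hb (Rmin_l _ _))); lia.
Qed.

End DistContinuity.

Lemma sumR_ext n f g : (forall v, (v < n)%nat -> f v = g v) -> sumR n f = sumR n g.
Proof.
  induction n as [|n IH]; intro E; simpl; [reflexivity|].
  rewrite IH, E; [reflexivity | lia | intros v Hv; apply E; lia].
Qed.

Lemma sumR_plus n f g : sumR n (fun v => f v + g v) = sumR n f + sumR n g.
Proof. induction n as [|n IH]; simpl; [ring | rewrite IH; ring]. Qed.

Lemma sumR_point n a c : (a < n)%nat -> sumR n (fun v => if Nat.eqb v a then c else 0) = c.
Proof.
  induction n as [|n IH]; intro Ha; [lia|]; simpl.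
  destruct (Nat.eqb_spec n a) as [->|Hna].
  - rewrite (sumR_ext a _ (fun _ => 0)).
    + assert (Z : sumR a (fun _ => 0) = 0) by (clear; induction a as [|a IH]; simpl; lra).
      rewrite Z; ring.
    + intros v Hv; destruct (Nat.eqb_spec v a); [lia | reflexivity].
  - rewrite IH by lia; ring.
Qed.

Lemma sumR_nonneg n f : (forall w, 0 <= f w) -> 0 <= sumR n f.
Proof. intro Hnn; induction n as [|n IH]; simpl; [lra | pose proof (Hnn n); lra]. Qed.

Lemma sumR_ge_term n f v : (forall w, 0 <= f w) -> (v < n)%nat -> f v <= sumR n f.
Proof.
  intros Hnn; induction n as [|n IH]; intro Hv; [lia|]; simpl.
  pose proof (sumR_nonneg n f Hnn).
  destruct (Nat.eq_dec v n) as [->|Hvn]; [pose proof (Hnn n); lra|].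
  pose proof (IH ltac:(lia)); pose proof (Hnn n); lra.
Qed.

Lemma sumR_le_const n f c : (forall v, (v < n)%nat -> f v <= c) -> sumR n f <= INR n * c.
Proof.
  induction n as [|n IH]; intro H; cbn [sumR]; [simpl; lra|].
  rewrite S_INR; pose proof (IH ltac:(intros v Hv; apply H; lia)); pose proof (H n ltac:(lia)); lra.
Qed.

Lemma Rabs_le_distn n x y v : (v < n)%nat -> Rabs (x v - y v) <= distn n x y.
Proof.
  intro Hv; unfold distn; rewrite <- sqrt_Rsqr_abs, Rsqr_pow2.
  apply sqrt_le_1_alt, (sumR_ge_term n (fun w => (x w - y w) ^ 2)); [|exact Hv].
  intro w; apply pow2_ge_0.
Qed.

Lemma distn_le n x y c :
  (forall v, (v < n)%nat -> Rabs (x v - y v) <= c) -> distn n x y <= INR n * c.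
Proof.
  intro H; destruct n as [|m]; [unfold distn; simpl; rewrite sqrt_0; lra|].
  assert (Hc : 0 <= c) by (eapply Rle_trans; [apply Rabs_pos | apply (H 0%nat); lia]).
  assert (Hn : 1 <= INR (S m)) by (rewrite S_INR; pose proof (pos_INR m); lra).
  unfold distn; rewrite <- (sqrt_pow2 (INR (S m) * c)) by nra.
  apply sqrt_le_1_alt; apply Rle_trans with (INR (S m) * c ^ 2); [|nra].
  apply sumR_le_const; intros v Hv.
  rewrite <- (Rsqr_pow2 c), <- Rsqr_pow2; apply Rsqr_le_abs_1.
  rewrite (Rabs_pos_eq c Hc); apply H, Hv.
Qed.

Lemma dcontinuous_into_distn {A} (d : A -> A -> R) n (F : A -> nat -> R) a :
  (forall v, (v < n)%nat -> dcontinuous d (fun b => F b v) a) ->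
  forall eps, 0 < eps -> exists delta, 0 < delta /\
    forall b, d a b < delta -> distn n (F a) (F b) < eps.
Proof.
  intros Hcont e He.
  pose proof (pos_INR n) as Hn.
  destruct (dcontinuous_common_delta d n F a (e / (INR n + 1))) as [delta [Hdelta Hnear]];
    [apply Rdiv_lt_0_compat; lra | exact Hcont|].
  exists delta; split; [exact Hdelta|]; intros b Hb.
  eapply Rle_lt_trans.
  - apply distn_le; intros v Hv; rewrite Rabs_minus_sym; left; exact (Hnear b Hb v Hv).
  - apply Rmult_lt_reg_r with (INR n + 1); [lra|].
    field_simplify; nra.
Qed.

Definition r3coord (y : R3) (v : nat) : R :=
  match v with 0%nat => r3x y | 1%nat => r3y y | _ => r3z y end.

Lemma eucl3_distn x y : eucl3 x y = distn 3 (r3coord x) (r3coord y).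
Proof. unfold eucl3, distn; simpl; rewrite Rplus_0_l; reflexivity. Qed.

Lemma dcontinuous_proj n v a : (v < n)%nat -> dcontinuous (distn n) (fun x => x v) a.
Proof.
  intro Hv; apply dcontinuous_of_lipschitz; intro b.
  rewrite Rabs_minus_sym; apply Rabs_le_distn, Hv.
Qed.

Lemma dcontinuous_r3coord v a : dcontinuous eucl3 (fun y => r3coord y v) a.
Proof.
  assert (Hc : forall w, (w < 3)%nat -> dcontinuous eucl3 (fun y => r3coord y w) a).
  { intros w Hw; apply dcontinuous_of_lipschitz; intro b.
    rewrite Rabs_minus_sym, eucl3_distn; apply Rabs_le_distn, Hw. }
  destruct v as [|[|v]]; [apply Hc; lia | apply Hc; lia | exact (Hc 2%nat ltac:(lia))].
Qed.

Lemma dcontinuous_r3x a : dcontinuous eucl3 r3x a.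
Proof. exact (dcontinuous_r3coord 0 a). Qed.
Lemma dcontinuous_r3y a : dcontinuous eucl3 r3y a.
Proof. exact (dcontinuous_r3coord 1 a). Qed.
Lemma dcontinuous_r3z a : dcontinuous eucl3 r3z a.
Proof. exact (dcontinuous_r3coord 2 a). Qed.

Ltac dcontinuity :=
  repeat first
    [ apply dcontinuous_const
    | apply dcontinuous_plus
    | apply dcontinuous_minus
    | apply dcontinuous_mult
    | apply dcontinuous_opp
    | apply dcontinuous_pow2
    | apply dcontinuous_abs
    | apply dcontinuous_inv
    | apply dcontinuous_sqrt
    | apply dcontinuous_r3x | apply dcontinuous_r3y | apply dcontinuous_r3z
    | (apply dcontinuous_proj; lia) ].

Lemma in_simplex_nonneg f x : in_simplex f x -> forall v, 0 <= x v.
Proof.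
  intros (Hoff & Ha & Hb & Hc & _) v.
  destruct (Nat.eq_dec v (tA f)) as [->|]; [exact Ha|].
  destruct (Nat.eq_dec v (tB f)) as [->|]; [exact Hb|].
  destruct (Nat.eq_dec v (tC f)) as [->|]; [exact Hc|].
  rewrite Hoff; [lra | unfold in_triangle; tauto].
Qed.

Definition octahedron : list tri2 :=
  ((0,2,4) :: (0,2,5) :: (0,3,4) :: (0,3,5) ::
   (1,2,4) :: (1,2,5) :: (1,3,4) :: (1,3,5) :: nil)%nat.

Lemma octahedron_complex : simplicial_complex2 6 octahedron.
Proof.
  split; [discriminate|]; split.
  - intros f Hf; simpl in Hf; repeat destruct Hf as [<-|Hf]; try contradiction;
      cbv [tA tB tC fst snd]; lia.
  - intros v Hv; destruct v as [|[|[|[|[|[|v]]]]]]; try lia;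
      [exists (0,2,4)%nat | exists (1,2,4)%nat | exists (0,2,4)%nat
      | exists (0,3,4)%nat | exists (0,2,4)%nat | exists (0,2,5)%nat];
      (split; [simpl; tauto | cbv [in_triangle tA tB tC fst snd]; lia]).
Qed.

Definition octa_barycentric (x : nat -> R) : Prop :=
  (forall v, (6 <= v)%nat -> x v = 0) /\ (forall v, 0 <= x v) /\
  x 0%nat * x 1%nat = 0 /\ x 2%nat * x 3%nat = 0 /\ x 4%nat * x 5%nat = 0 /\
  x 0%nat + x 1%nat + x 2%nat + x 3%nat + x 4%nat + x 5%nat = 1.

Lemma realization_octahedron x : realization octahedron x <-> octa_barycentric x.
Proof.
  split.
  - intros [f [Hf Hs]].
    pose proof (in_simplex_nonneg f x Hs) as Hnn.
    destruct Hs as (Hoff & _ & _ & _ & Hsum).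
    simpl in Hf; repeat destruct Hf as [<-|Hf]; try contradiction;
      cbv [in_triangle tA tB tC fst snd] in Hoff, Hsum;
      (split; [intros v Hv; apply Hoff; lia | split; [exact Hnn|]]);
      repeat match goal with |- context [x ?v] => rewrite (Hoff v) by lia end;
      repeat split; lra.
  - intros (Hbeyond & Hnn & H01 & H23 & H45 & Hsum).
    destruct (Rmult_integral _ _ H01) as [Z0|Z1];
    destruct (Rmult_integral _ _ H23) as [Z2|Z3];
    destruct (Rmult_integral _ _ H45) as [Z4|Z5];
      [ exists (1,3,5)%nat | exists (1,3,4)%nat | exists (1,2,5)%nat | exists (1,2,4)%nat
      | exists (0,3,5)%nat | exists (0,3,4)%nat | exists (0,2,5)%nat | exists (0,2,4)%nat ];
      (split; [simpl; tauto|]);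
      (split; [ intros v Hv; cbv [in_triangle tA tB tC fst snd] in Hv;
                destruct v as [|[|[|[|[|[|v]]]]]];
                first [assumption | exfalso; lia | apply Hbeyond; lia] |]);
      cbv [tA tB tC fst snd]; repeat split; try apply Hnn; lra.
Qed.

Definition pos_part (a : R) : R := (a + Rabs a) / 2.
Definition neg_part (a : R) : R := (Rabs a - a) / 2.

Lemma pos_part_nonneg a : 0 <= pos_part a.
Proof. unfold pos_part; pose proof (Rabs_maj2 a); lra. Qed.

Lemma neg_part_nonneg a : 0 <= neg_part a.
Proof. unfold neg_part; pose proof (Rle_abs a); lra. Qed.

Lemma pos_part_add_neg_part a : pos_part a + neg_part a = Rabs a.
Proof. unfold pos_part, neg_part; lra. Qed.

Lemma pos_part_sub_neg_part a : pos_part a - neg_part a = a.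
Proof. unfold pos_part, neg_part; lra. Qed.

Lemma pos_part_mul_neg_part a : pos_part a * neg_part a = 0.
Proof.
  unfold pos_part, neg_part; destruct (Rle_dec 0 a).
  - rewrite Rabs_pos_eq by assumption; lra.
  - rewrite Rabs_left by lra; lra.
Qed.

Lemma pos_neg_part_split a b : 0 <= a -> 0 <= b -> a * b = 0 ->
  pos_part (a - b) = a /\ neg_part (a - b) = b.
Proof.
  intros Ha Hb Hab; unfold pos_part, neg_part.
  destruct (Rmult_integral _ _ Hab) as [-> | ->].
  - rewrite Rabs_left1 by lra; split; lra.
  - rewrite Rabs_pos_eq by lra; split; lra.
Qed.

Lemma Rabs_div_pos a c : 0 < c -> Rabs (a / c) = Rabs a / c.
Proof. intro Hc; unfold Rdiv; rewrite Rabs_mult, Rabs_inv, (Rabs_pos_eq c); lra. Qed.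

Lemma pos_part_div a c : 0 < c -> pos_part (a / c) = pos_part a / c.
Proof. intro Hc; unfold pos_part; rewrite Rabs_div_pos by exact Hc; field; lra. Qed.

Lemma neg_part_div a c : 0 < c -> neg_part (a / c) = neg_part a / c.
Proof. intro Hc; unfold neg_part; rewrite Rabs_div_pos by exact Hc; field; lra. Qed.

Definition l1_norm (y : R3) : R := Rabs (r3x y) + Rabs (r3y y) + Rabs (r3z y).
Definition sq_norm (y : R3) : R := r3x y ^ 2 + r3y y ^ 2 + r3z y ^ 2.
Definition r3div (y : R3) (c : R) : R3 := (r3x y / c, r3y y / c, r3z y / c).
Definition normalize (y : R3) : R3 := r3div y (sqrt (sq_norm y)).

Lemma sq_norm_pos y : 0 < l1_norm y -> 0 < sq_norm y.
Proof.
  unfold l1_norm, sq_norm; intro Hl.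
  destruct (Rle_lt_dec (r3x y ^ 2 + r3y y ^ 2 + r3z y ^ 2) 0) as [Hle|]; [exfalso|assumption].
  assert (Ex : r3x y = 0) by nra; assert (Ey : r3y y = 0) by nra; assert (Ez : r3z y = 0) by nra.
  rewrite Ex, Ey, Ez, Rabs_R0 in Hl; lra.
Qed.

Lemma l1_norm_pos y : 0 < sq_norm y -> 0 < l1_norm y.
Proof.
  unfold l1_norm, sq_norm; intro Hs.
  pose proof (Rabs_pos (r3x y)); pose proof (Rabs_pos (r3y y)); pose proof (Rabs_pos (r3z y)).
  destruct (Rle_lt_dec (Rabs (r3x y) + Rabs (r3y y) + Rabs (r3z y)) 0) as [Hle|];
    [exfalso | assumption].
  rewrite (Rabs_eq_0 (r3x y)), (Rabs_eq_0 (r3y y)), (Rabs_eq_0 (r3z y)) in Hs by lra; lra.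
Qed.

Lemma l1_norm_div y c : 0 < c -> l1_norm (r3div y c) = l1_norm y / c.
Proof.
  intro Hc; unfold l1_norm, r3div, r3x, r3y, r3z; simpl.
  rewrite !Rabs_div_pos by exact Hc; field; lra.
Qed.

Lemma sq_norm_div y c : c <> 0 -> sq_norm (r3div y c) = sq_norm y / c ^ 2.
Proof. intro Hc; unfold sq_norm, r3div, r3x, r3y, r3z; simpl; field; exact Hc. Qed.

Lemma unit_sphere_normalize y : 0 < sq_norm y -> unit_sphere (normalize y).
Proof.
  intro Hs; pose proof (sqrt_lt_R0 _ Hs) as Hr.
  change (sq_norm (normalize y) = 1); unfold normalize.
  rewrite sq_norm_div, pow2_sqrt by lra; field; lra.
Qed.

Lemma normalize_div y c : 0 < c -> 0 < sq_norm y -> normalize (r3div y c) = normalize y.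
Proof.
  intros Hc Hs; pose proof (sqrt_lt_R0 _ Hs) as Hr.
  unfold normalize at 1; rewrite sq_norm_div by lra.
  rewrite sqrt_div_alt, sqrt_pow2 by (try apply pow_lt; lra).
  unfold normalize, r3div, r3x, r3y, r3z; simpl; f_equal; [f_equal|]; field; lra.
Qed.

Lemma normalize_unit y : unit_sphere y -> normalize y = y.
Proof.
  intro Hy; change (sq_norm y = 1) in Hy.
  unfold normalize; rewrite Hy, sqrt_1.
  destruct y as [[a b] c]; unfold r3div, r3x, r3y, r3z; simpl; f_equal; [f_equal|]; field.
Qed.

Definition octa_point (x : nat -> R) : R3 :=
  (x 0%nat - x 1%nat, x 2%nat - x 3%nat, x 4%nat - x 5%nat).

Definition octa_to_sphere (x : nat -> R) : R3 := normalize (octa_point x).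

Definition sphere_to_octa (y : R3) (v : nat) : R :=
  match v with
  | 0%nat => pos_part (r3x y) / l1_norm y | 1%nat => neg_part (r3x y) / l1_norm y
  | 2%nat => pos_part (r3y y) / l1_norm y | 3%nat => neg_part (r3y y) / l1_norm y
  | 4%nat => pos_part (r3z y) / l1_norm y | 5%nat => neg_part (r3z y) / l1_norm y
  | _ => 0
  end.

Lemma octa_point_split x : octa_barycentric x ->
  pos_part (r3x (octa_point x)) = x 0%nat /\ neg_part (r3x (octa_point x)) = x 1%nat /\
  pos_part (r3y (octa_point x)) = x 2%nat /\ neg_part (r3y (octa_point x)) = x 3%nat /\
  pos_part (r3z (octa_point x)) = x 4%nat /\ neg_part (r3z (octa_point x)) = x 5%nat.
Proof.
  intros (_ & Hnn & H01 & H23 & H45 & _); unfold octa_point, r3x, r3y, r3z; simpl.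
  destruct (pos_neg_part_split _ _ (Hnn 0%nat) (Hnn 1%nat) H01).
  destruct (pos_neg_part_split _ _ (Hnn 2%nat) (Hnn 3%nat) H23).
  destruct (pos_neg_part_split _ _ (Hnn 4%nat) (Hnn 5%nat) H45).
  repeat split; assumption.
Qed.

Lemma l1_norm_octa_point x : octa_barycentric x -> l1_norm (octa_point x) = 1.
Proof.
  intro Hx; pose proof (octa_point_split x Hx) as (E0 & E1 & E2 & E3 & E4 & E5).
  destruct Hx as (_ & _ & _ & _ & _ & Hsum).
  unfold l1_norm; rewrite <- !pos_part_add_neg_part, E0, E1, E2, E3, E4, E5; lra.
Qed.

Lemma sphere_to_octa_octa_point x v :
  octa_barycentric x -> sphere_to_octa (octa_point x) v = x v.
Proof.
  intro Hx; pose proof (l1_norm_octa_point x Hx) as Hl.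
  pose proof (octa_point_split x Hx) as (E0 & E1 & E2 & E3 & E4 & E5).
  destruct v as [|[|[|[|[|[|v]]]]]]; unfold sphere_to_octa; rewrite ?Hl;
    rewrite ?E0, ?E1, ?E2, ?E3, ?E4, ?E5, ?Rdiv_1_r; try reflexivity.
  destruct Hx as (Hbeyond & _); rewrite Hbeyond by lia; reflexivity.
Qed.

Lemma sphere_to_octa_div y c v : 0 < c -> 0 < l1_norm y ->
  sphere_to_octa (r3div y c) v = sphere_to_octa y v.
Proof.
  intros Hc Hl; unfold sphere_to_octa; rewrite l1_norm_div by exact Hc.
  destruct v as [|[|[|[|[|[|v]]]]]]; try reflexivity; unfold r3div, r3x, r3y, r3z; simpl;
    rewrite ?pos_part_div, ?neg_part_div by exact Hc; field; lra.
Qed.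

Lemma octa_point_sphere_to_octa y : octa_point (sphere_to_octa y) = r3div y (l1_norm y).
Proof.
  unfold octa_point, r3div; cbn [sphere_to_octa]; unfold Rdiv.
  rewrite <- !Rmult_minus_distr_r, !pos_part_sub_neg_part; reflexivity.
Qed.

Lemma sphere_to_octa_barycentric y : 0 < l1_norm y -> octa_barycentric (sphere_to_octa y).
Proof.
  intro Hl; split; [intros v Hv; destruct v as [|[|[|[|[|[|v]]]]]]; reflexivity || lia|].
  split.
  - intro v; destruct v as [|[|[|[|[|[|v]]]]]]; unfold sphere_to_octa; try lra;
      apply Rdiv_le_0_compat; (apply pos_part_nonneg || apply neg_part_nonneg || lra).
  - assert (Hprod : forall a, pos_part a / l1_norm y * (neg_part a / l1_norm y) = 0).
    { intro a; replace (pos_part a / l1_norm y * (neg_part a / l1_norm y))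
        with (pos_part a * neg_part a / l1_norm y ^ 2) by (field; lra).
      rewrite pos_part_mul_neg_part; unfold Rdiv; ring. }
    assert (Hsum : l1_norm y = pos_part (r3x y) + neg_part (r3x y) + pos_part (r3y y)
                   + neg_part (r3y y) + pos_part (r3z y) + neg_part (r3z y))
      by (unfold l1_norm; rewrite <- !pos_part_add_neg_part; ring).
    unfold sphere_to_octa; repeat split; try apply Hprod.
    set (l := l1_norm y) in *.
    transitivity ((pos_part (r3x y) + neg_part (r3x y) + pos_part (r3y y)
                   + neg_part (r3y y) + pos_part (r3z y) + neg_part (r3z y)) / l);
      [field | rewrite <- Hsum; field]; lra.
Qed.

Lemma octa_to_sphere_continuous x : octa_barycentric x ->
  forall eps, 0 < eps -> exists delta, 0 < delta /\
    forall x', distn 6 x x' < delta -> eucl3 (octa_to_sphere x) (octa_to_sphere x') < eps.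
Proof.
  intros Hx e He.
  assert (Hs : 0 < sq_norm (octa_point x))
    by (apply sq_norm_pos; rewrite l1_norm_octa_point by exact Hx; lra).
  pose proof (sqrt_lt_R0 _ Hs) as Hr.
  destruct (dcontinuous_into_distn (distn 6) 3 (fun b => r3coord (octa_to_sphere b)) x)
    with (eps := e) as [delta [Hdelta Hnear]]; [|exact He|].
  - intros v Hv; destruct v as [|[|[|v]]]; try lia;
      unfold octa_to_sphere, normalize, r3div, sq_norm, octa_point, r3coord, r3x, r3y, r3z,
        Rdiv in *; simpl in *; dcontinuity; lra.
  - exists delta; split; [exact Hdelta|]; intros x' Hx'; rewrite eucl3_distn; exact (Hnear x' Hx').
Qed.

Lemma sphere_to_octa_continuous y : 0 < l1_norm y ->
  forall eps, 0 < eps -> exists delta, 0 < delta /\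
    forall y', eucl3 y y' < delta -> distn 6 (sphere_to_octa y) (sphere_to_octa y') < eps.
Proof.
  intro Hl; apply dcontinuous_into_distn; intros v Hv.
  destruct v as [|[|[|[|[|[|v]]]]]]; try lia;
    unfold sphere_to_octa, pos_part, neg_part, l1_norm, Rdiv in *; dcontinuity; lra.
Qed.

Lemma octahedron_sphere_type : sphere_type 6 octahedron.
Proof.
  exists octa_to_sphere, sphere_to_octa.
  assert (Hl : forall y, unit_sphere y -> 0 < l1_norm y)
    by (intros y Hy; apply l1_norm_pos; change (sq_norm y = 1) in Hy; lra).
  assert (Hs : forall x, octa_barycentric x -> 0 < sq_norm (octa_point x))
    by (intros x Hx; apply sq_norm_pos; rewrite l1_norm_octa_point by exact Hx; lra).
  repeat split.
  - intros x Hx; apply unit_sphere_normalize, Hs, realization_octahedron, Hx.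
  - intros y Hy; apply realization_octahedron, sphere_to_octa_barycentric, Hl, Hy.
  - intros x Hx v; apply realization_octahedron in Hx; unfold octa_to_sphere, normalize.
    pose proof (sqrt_lt_R0 _ (Hs x Hx)); pose proof (l1_norm_octa_point x Hx).
    rewrite sphere_to_octa_div by lra; apply sphere_to_octa_octa_point, Hx.
  - intros y Hy; unfold octa_to_sphere; rewrite octa_point_sphere_to_octa.
    rewrite normalize_div, normalize_unit by (auto; change (sq_norm y = 1) in Hy; lra).
    reflexivity.
  - intros x Hx e He; apply realization_octahedron in Hx.
    destruct (octa_to_sphere_continuous x Hx e He) as [delta [Hdelta H]].
    exists delta; split; [exact Hdelta|]; intros x' _; apply H.
  - intros y Hy e He.
    destruct (sphere_to_octa_continuous y (Hl y Hy) e He) as [delta [Hdelta H]].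
    exists delta; split; [exact Hdelta|]; intros y' _; apply H.
Qed.

Lemma sumR_on_triangle n (f : tri2) (F : nat -> R) :
  (tA f < n)%nat -> (tB f < n)%nat -> (tC f < n)%nat ->
  tA f <> tB f -> tB f <> tC f -> tA f <> tC f ->
  (forall v, ~ in_triangle f v -> F v = 0) ->
  sumR n F = F (tA f) + F (tB f) + F (tC f).
Proof.
  intros Ha Hb Hc Hab Hbc Hac Hoff.
  rewrite (sumR_ext n F (fun v => (if Nat.eqb v (tA f) then F (tA f) else 0)
      + (if Nat.eqb v (tB f) then F (tB f) else 0) + (if Nat.eqb v (tC f) then F (tC f) else 0))).
  - rewrite !sumR_plus, !sumR_point by assumption; reflexivity.
  - intros v _; destruct (Nat.eqb_spec v (tA f)), (Nat.eqb_spec v (tB f)), (Nat.eqb_spec v (tC f));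
      try congruence; first [subst v; ring | rewrite Hoff by (unfold in_triangle; tauto); ring].
Qed.

Lemma r3x_poly_map n p x : r3x (poly_map n p x) = sumR n (fun v => x v * r3x (p v)).
Proof.
  unfold poly_map; induction n as [|n IH]; simpl; [reflexivity | rewrite <- IH; reflexivity].
Qed.

Lemma r3y_poly_map n p x : r3y (poly_map n p x) = sumR n (fun v => x v * r3y (p v)).
Proof.
  unfold poly_map; induction n as [|n IH]; simpl; [reflexivity | rewrite <- IH; reflexivity].
Qed.

Definition xy_area (a b c : R3) : R :=
  (r3x b - r3x a) * (r3y c - r3y a) - (r3y b - r3y a) * (r3x c - r3x a).

Lemma affine_coords_unique_xy (a b c : R3) (da db dc : R) :
  xy_area a b c <> 0 -> da + db + dc = 0 ->
  da * r3x a + db * r3x b + dc * r3x c = 0 -> da * r3y a + db * r3y b + dc * r3y c = 0 ->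
  da = 0 /\ db = 0 /\ dc = 0.
Proof.
  unfold xy_area; intros Harea Hs Hx Hy.
  assert (E : da = - db - dc) by lra; subst da.
  set (X := (- db - dc) * r3x a + db * r3x b + dc * r3x c) in Hx.
  set (Y := (- db - dc) * r3y a + db * r3y b + dc * r3y c) in Hy.
  assert (Hb : db * ((r3x b - r3x a) * (r3y c - r3y a) - (r3y b - r3y a) * (r3x c - r3x a)) = 0).
  { transitivity ((r3y c - r3y a) * X - (r3x c - r3x a) * Y);
      [unfold X, Y; ring | rewrite Hx, Hy; ring]. }
  assert (Hc : dc * ((r3x b - r3x a) * (r3y c - r3y a) - (r3y b - r3y a) * (r3x c - r3x a)) = 0).
  { transitivity ((r3x b - r3x a) * Y - (r3y b - r3y a) * X);
      [unfold X, Y; ring | rewrite Hx, Hy; ring]. }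
  destruct (Rmult_integral _ _ Hb) as [Eb|]; [|contradiction].
  destruct (Rmult_integral _ _ Hc) as [Ec|]; [|contradiction].
  lra.
Qed.

Lemma is_polyhedron_of_xy_area n faces p : simplicial_complex2 n faces ->
  (forall f, In f faces -> xy_area (p (tA f)) (p (tB f)) (p (tC f)) <> 0) ->
  is_polyhedron n faces p.
Proof.
  intros [_ [Hface _]] Harea f Hf x y Hx Hy Heq.
  destruct (Hface f Hf) as (Ha & Hb & Hc & Hab & Hbc & Hac).
  assert (Hsum : forall z, in_simplex f z -> forall g : nat -> R,
    sumR n (fun v => z v * g v) = z (tA f) * g (tA f) + z (tB f) * g (tB f) + z (tC f) * g (tC f)).
  { intros z [Hoff _] g; apply (sumR_on_triangle n f (fun v => z v * g v)); try assumption.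
    intros v Hv; rewrite Hoff by exact Hv; ring. }
  pose proof (f_equal r3x Heq) as EX; pose proof (f_equal r3y Heq) as EY.
  rewrite !r3x_poly_map, !Hsum in EX by assumption.
  rewrite !r3y_poly_map, !Hsum in EY by assumption.
  destruct Hx as (Hxoff & _ & _ & _ & Hxs), Hy as (Hyoff & _ & _ & _ & Hys).
  destruct (affine_coords_unique_xy (p (tA f)) (p (tB f)) (p (tC f))
              (x (tA f) - y (tA f)) (x (tB f) - y (tB f)) (x (tC f) - y (tC f)))
    as (Ea & Eb & Ec); [apply Harea, Hf | lra | lra | lra |].
  intro v; destruct (Nat.eq_dec v (tA f)) as [->|]; [lra|].
  destruct (Nat.eq_dec v (tB f)) as [->|]; [lra|].
  destruct (Nat.eq_dec v (tC f)) as [->|]; [lra|].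
  rewrite Hxoff, Hyoff by (unfold in_triangle; tauto); reflexivity.
Qed.

Definition linear_motion (p w : nat -> R3) (t : R) (v : nat) : R3 :=
  r3add (p v) (r3scal t (w v)).

Lemma linear_motion_0 p w v : linear_motion p w 0 v = p v.
Proof.
  unfold linear_motion, r3add, r3scal, r3x, r3y, r3z; destruct (p v) as [[a b] c]; simpl.
  f_equal; [f_equal|]; ring.
Qed.

Lemma poly_map_linear_motion_0 n p w x : poly_map n (linear_motion p w 0) x = poly_map n p x.
Proof.
  unfold poly_map; induction n as [|n IH]; simpl; [reflexivity|].
  rewrite IH, linear_motion_0; reflexivity.
Qed.

Lemma is_polyhedron_linear_motion_0 n faces p w :
  is_polyhedron n faces (linear_motion p w 0) -> is_polyhedron n faces p.
Proof.
  intros H f Hf x y Hx Hy E; apply (H f Hf x y Hx Hy).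
  rewrite !poly_map_linear_motion_0; exact E.
Qed.

Lemma mink_dot_linear_motion p w t a b :
  mink_dot (r3sub (linear_motion p w t a) (linear_motion p w t b))
           (r3sub (linear_motion p w t a) (linear_motion p w t b))
  = mink_dot (r3sub (p a) (p b)) (r3sub (p a) (p b))
    + 2 * t * mink_dot (r3sub (p a) (p b)) (r3sub (w a) (w b))
    + t ^ 2 * mink_dot (r3sub (w a) (w b)) (r3sub (w a) (w b)).
Proof. unfold mink_dot, r3sub, linear_motion, r3add, r3scal, r3x, r3y, r3z; simpl; ring. Qed.

Lemma analytic_on_01_affine c0 c1 : analytic_on_01 (fun t => c0 + t * c1).
Proof.
  intros t0 _; exists 1; split; [lra|].
  set (a := fun k => match k with 0%nat => c0 + t0 * c1 | 1%nat => c1 | _ => 0 end).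
  exists a; intros t _ _; apply is_pseries_R; unfold is_series.
  change (is_lim_seq (sum_n (fun k => a k * (t - t0) ^ k)) (c0 + t * c1)).
  apply (is_lim_seq_ext_loc (fun _ => c0 + t * c1)); [|apply is_lim_seq_const].
  exists 1%nat; intros k Hk; destruct k as [|k]; [lia|].
  induction k as [|k IH].
  - rewrite sum_Sn, sum_O; unfold a, plus; simpl; ring.
  - rewrite sum_Sn, <- IH by lia; unfold a, plus; simpl; ring.
Qed.

Lemma flexible_of_linear_motion n faces p w :
  (forall t, 0 <= t <= 1 -> is_polyhedron n faces (linear_motion p w t)) ->
  (forall a b, is_edge faces a b ->
     mink_dot (r3sub (w a) (w b)) (r3sub (w a) (w b)) = 0 /\
     mink_dot (r3sub (p a) (p b)) (r3sub (w a) (w b)) = 0) ->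
  (exists v1 v2, (v1 < n)%nat /\ (v2 < n)%nat /\ exists t, 0 <= t <= 1 /\
     mink_len (r3sub (linear_motion p w t v1) (linear_motion p w t v2))
       <> mink_len (r3sub (p v1) (p v2))) ->
  flexible n faces p.
Proof.
  intros Hpoly Hedge Hstretch; exists (linear_motion p w).
  split; [exact Hpoly|]; split; [|split; [|split]].
  - intros v _; repeat split; apply analytic_on_01_affine.
  - intros v _; apply linear_motion_0.
  - intros a b Hab t _; unfold mink_len; rewrite !mink_dot_linear_motion.
    destruct (Hedge a b Hab) as [-> ->]; rewrite !Rmult_0_r, !Rplus_0_r; reflexivity.
  - destruct Hstretch as (v1 & v2 & H1 & H2 & t & Ht & Hne).
    exists v1, v2; split; [exact H1|]; split; [exact H2|]; exists t; split; [exact Ht|].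
    rewrite !linear_motion_0; exact Hne.
Qed.

Definition octa_vertex (v : nat) : R3 :=
  match v with
  | 1%nat => (0, 0, 1) | 2%nat => (0, 1, 0) | 3%nat => (0, -1, 0)
  | 4%nat => (-1, 1, -1) | 5%nat => (-1, -1, -1) | _ => (0, 0, 0)
  end.

Definition octa_velocity (v : nat) : R3 := if Nat.eqb v 0 then (1, 0, 1) else r3zero.

Lemma octa_vertex_in_null_plane v : v <> 1%nat -> r3x (octa_vertex v) = r3z (octa_vertex v).
Proof. intro Hv; destruct v as [|[|[|[|[|[|v]]]]]]; try lia; reflexivity. Qed.

Lemma octahedron_edge_not_01 a b : is_edge octahedron a b ->
  ~ (a = 0 /\ b = 1)%nat /\ ~ (a = 1 /\ b = 0)%nat.
Proof.
  intros [_ [f [Hf [Ha Hb]]]]; simpl in Hf.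
  repeat destruct Hf as [<-|Hf]; try contradiction;
    cbv [in_triangle tA tB tC fst snd] in Ha, Hb; lia.
Qed.

Lemma octa_motion_null a b : ~ (a = 0 /\ b = 1)%nat -> ~ (a = 1 /\ b = 0)%nat ->
  let e := r3sub (octa_velocity a) (octa_velocity b) in
  mink_dot e e = 0 /\ mink_dot (r3sub (octa_vertex a) (octa_vertex b)) e = 0.
Proof.
  intros H01 H10 e; unfold e, octa_velocity.
  destruct (Nat.eqb_spec a 0) as [->|Ha], (Nat.eqb_spec b 0) as [->|Hb];
    unfold mink_dot, r3sub, r3zero; cbv [r3x r3y r3z fst snd]; (split; [ring|]).
  - ring.
  - pose proof (octa_vertex_in_null_plane b ltac:(lia)) as Hnull.
    destruct (octa_vertex b) as [[bx by'] bz]; cbv [r3x r3z fst snd] in Hnull; simpl; lra.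
  - pose proof (octa_vertex_in_null_plane a ltac:(lia)) as Hnull.
    destruct (octa_vertex a) as [[ax ay] az]; cbv [r3x r3z fst snd] in Hnull; simpl; lra.
  - ring.
Qed.

Lemma octa_motion_polyhedron t : 0 <= t <= 1 ->
  is_polyhedron 6 octahedron (linear_motion octa_vertex octa_velocity t).
Proof.
  intro Ht; apply is_polyhedron_of_xy_area; [exact octahedron_complex|].
  intros f Hf; simpl in Hf; repeat destruct Hf as [<-|Hf]; try contradiction;
    unfold xy_area, linear_motion, octa_vertex, octa_velocity, r3add, r3scal, r3zero;
    cbv [r3x r3y r3z tA tB tC fst snd]; simpl; nra.
Qed.

Lemma mink_len_eq_real u : 0 <= mink_dot u u -> mink_len u = (sqrt (mink_dot u u), 0).
Proof. intro H; unfold mink_len; destruct (Rle_dec 0 (mink_dot u u)); [reflexivity | lra]. Qed.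

Lemma mink_len_eq_imag u : mink_dot u u < 0 -> mink_len u = (0, sqrt (- mink_dot u u)).
Proof. intro H; unfold mink_len; destruct (Rle_dec 0 (mink_dot u u)); [lra | reflexivity]. Qed.

Lemma octa_motion_stretches_01 :
  let P := linear_motion octa_vertex octa_velocity 1 in
  mink_len (r3sub (P 0%nat) (P 1%nat)) <> mink_len (r3sub (octa_vertex 0) (octa_vertex 1)).
Proof.
  intro P.
  assert (E1 : mink_dot (r3sub (P 0%nat) (P 1%nat)) (r3sub (P 0%nat) (P 1%nat)) = 1).
  { unfold P, mink_dot, r3sub, linear_motion, octa_vertex, octa_velocity, r3add, r3scal;
      cbv [r3x r3y r3z fst snd]; simpl; ring. }
  assert (E0 : mink_dot (r3sub (octa_vertex 0) (octa_vertex 1))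
                        (r3sub (octa_vertex 0) (octa_vertex 1)) = -1).
  { unfold mink_dot, r3sub, octa_vertex; cbv [r3x r3y r3z fst snd]; ring. }
  rewrite mink_len_eq_real, mink_len_eq_imag, E1, E0 by lra.
  intro H; injection H; rewrite sqrt_1; lra.
Qed.

Lemma octahedron_flexible : flexible 6 octahedron octa_vertex.
Proof.
  apply (flexible_of_linear_motion _ _ _ octa_velocity).
  - exact octa_motion_polyhedron.
  - intros a b Hab; destruct (octahedron_edge_not_01 a b Hab).
    apply octa_motion_null; assumption.
  - exists 0%nat, 1%nat; split; [lia|]; split; [lia|].
    exists 1; split; [lra | exact octa_motion_stretches_01].
Qed.

Theorem theorem1 :
  exists (n : nat) (faces : list tri2) (p : nat -> R3),
    simplicial_complex2 n faces /\ sphere_type n faces /\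
    is_polyhedron n faces p /\ flexible n faces p.
Proof.
  exists 6%nat, octahedron, octa_vertex.
  split; [exact octahedron_complex|].
  split; [exact octahedron_sphere_type|].
  split; [|exact octahedron_flexible].
  apply (is_polyhedron_linear_motion_0 _ _ _ octa_velocity), octa_motion_polyhedron; lra.
Qed.
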